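(* Let $P>0$, $K\le N$, and for $\mathbf u\in\mathbb R^N$, $S\subseteq[N]$, $\mathbf p\in[0,P]^N$ let $Q(\mathbf u;S,\mathbf p)=\frac{\sum_{j\in S}p_je^{u_j}}{1+\sum_{j\in S}e^{u_j}}$, $q_i(S,\mathbf p|e^{\mathbf u})=\frac{e^{u_i}}{1+\sum_{j\in S}e^{u_j}}$ ($i\in S$) and $q_0(S,\mathbf p|e^{\mathbf u})=\frac1{1+\sum_{j\in S}e^{u_j}}$. (i) For any $(S,\mathbf p)\in\mathcal S_K\times[0,P]^N$ and $\mathbf u,\mathbf u'\in\mathbb R^N$, with $\mathbf w=\mathbf u'-\mathbf u$, $$|Q(\mathbf u';S,\mathbf p)-Q(\mathbf u;S,\mathbf p)|\le\sqrt{\sum_{j\in S}e^{u_j}|p_j-Q(\mathbf u;S,\mathbf p)|^2}\sqrt{\sum_{j\in S}q_j(S,\mathbf p|e^{\mathbf u})q_0(S,\mathbf p|e^{\mathbf u})w_j^2}+\frac32P\max_{j\in S}w_j^2.$$ (ii) Let $\mathbf u,\widetilde{\mathbf u}\in\mathbb R^N$ with $\widetilde{\mathbf u}\ge\mathbf u$ elementwise, let $(\widetilde S,\widetilde{\mathbf p})\in\operatorname{argmax}_{(S,\mathbf p)\in\mathcal S_K\times[0,P]^N}Q(\widetilde{\mathbf u};S,\mathbf p)$ and $\widetilde{\mathbf w}=\widetilde{\mathbf u}-\mathbf u$. Then $$|Q(\widetilde{\mathbf u};\widetilde S,\widetilde{\mathbf p})-Q(\mathbf u;\widetilde S,\widetilde{\mathbf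 p})|\le P\sqrt{\sum_{j\in\widetilde S}q_j(\widetilde S,\widetilde{\mathbf p}|e^{\widetilde{\mathbf u}})q_0(\widetilde S,\widetilde{\mathbf p}|e^{\widetilde{\mathbf u}})\widetilde w_j^2}+\frac32P\max_{j\in\widetilde S}\widetilde w_j^2.$$
   Context: $\mathcal S_K=\{S\subseteq[N]:|S|\le K\}$. The utility vector $\mathbf u$ is treated as a fixed vector, not depending on $\mathbf p$. *)

From HB Require Import structures.
From mathcomp Require Import all_boot all_order all_algebra.
From mathcomp Require Import all_classical all_reals all_analysis.
Set Implicit Arguments. Unset Strict Implicit. Unset Printing Implicit Defensive.
Import Order.TTheory GRing.Theory Num.Theory.
Local Open Scope ring_scope.

Section MNL.
Variables (R : realType) (N : nat).

Definition denom (u : 'I_N -> R) (S : {set 'I_N}) : R :=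
  1 + \sum_(j in S) expR (u j).

Definition Qrev (u : 'I_N -> R) (S : {set 'I_N}) (p : 'I_N -> R) : R :=
  (\sum_(j in S) p j * expR (u j)) / denom u S.

(* choice probabilities q_i(S,p | e^u) (i in S) and q_0(S,p | e^u);
   they do not depend on p, the argument is kept to mirror the paper *)
Definition qi (S : {set 'I_N}) (p : 'I_N -> R) (u : 'I_N -> R) (i : 'I_N) : R :=
  expR (u i) / denom u S.
Definition q0 (S : {set 'I_N}) (p : 'I_N -> R) (u : 'I_N -> R) : R :=
  1 / denom u S.

Definition feasible (K : nat) (P : R) (S : {set 'I_N}) (p : 'I_N -> R) : Prop :=
  (#|S| <= K)%N /\ (forall j, 0 <= p j <= P).

Definition maxS (S : {set 'I_N}) (x : 'I_N -> R) : R :=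
  \big[Num.max/0]_(j in S) x j.

End MNL.

From HB Require Import structures.
From mathcomp Require Import all_boot all_order all_algebra.
From mathcomp Require Import all_classical all_reals all_analysis.
From mathcomp Require Import ring lra.
Set Implicit Arguments.
Unset Strict Implicit.
Unset Printing Implicit Defensive.
Import Order.TTheory GRing.Theory Num.Theory.
Local Open Scope ring_scope.

(* Along the
   segment u + t w, Q is the mean of the prices under the choice distribution
   tilted by e^{t w} (the no-purchase option has price 0 and w_0 = 0).
   Differentiating the tilted mean gives a covariance, so Q'(0) = Cov(p, w),
   which Cauchy-Schwarz bounds by the product of square roots in (i); once more
   gives Q'' = E[(p - Q)(w - E w)^2], of absolute value at most
   P Var(w) <= P max w_j^2 because |p_j - Q| <= P.  The second-order Taylor
   formula then yields (i), even with 1/2 in place of 3/2.  For (ii), an optimal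
   pair must charge the maximal price P on its whole assortment (raising a lower
   price raises Q), and then sum_j e^{u_j} (P - Q)^2 = P^2 E / (1 + E)^2 <= P^2
   with E = sum_j e^{u_j}; applying (i) from ut to u gives (ii). *)

Lemma is_derive_big_sum (R : numFieldType) (V W : normedModType R) (I : Type)
    (r : seq I) (P : pred I) (F : I -> V -> W) (dF : I -> W) (x v : V) :
  (forall i, is_derive x v (F i) (dF i)) ->
  is_derive x v (fun t => \sum_(i <- r | P i) F i t) (\sum_(i <- r | P i) dF i).
Proof.
move=> dFx; rewrite -fct_sumE.
by elim/big_ind2: _ => // *; [exact: is_derive_cst | exact: is_deriveD].
Qed.

Section Calculus.
Variable R : realType.

Lemma is_derive_expR_affine (c k x : R) :
  is_derive x 1 (fun t => expR (c + t * k)) (k * expR (c + x * k)).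
Proof.
have daff : is_derive x 1 (fun t => c + t * k) k.
  (* [exact], unlike [apply:], matches [cst c + id * cst k] with the lambda
     up to conversion; [GRing.scale] on R is multiplication *)
  eapply is_derive_eq; first exact (is_deriveD (is_derive_cst c x 1)
    (is_deriveM (is_derive_id x 1) (is_derive_cst k x 1))).
  by rewrite /GRing.scale /=; ring.
by rewrite mulrC; exact: (is_derive1_comp (is_derive_expR _) daff).
Qed.

Lemma MVT_everywhere (f df : R -> R) (a b : R) : a < b ->
  (forall x : R, is_derive x 1 f (df x)) ->
  exists2 c, a < c < b & f b - f a = df c * (b - a).
Proof.
move=> ab fdf; have [c | c] := MVT ab (fun x _ => fdf x).
  by apply: derivable_within_continuous => x _; exact: ex_derive.
by rewrite in_itv /=; exists c.
Qed.

Lemma taylor2_remainder_le (f df d2f : R -> R) (a b B : R) : a < b ->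
  (forall x : R, is_derive x 1 f (df x)) -> (forall x : R, is_derive x 1 df (d2f x)) ->
  (forall x, `|d2f x| <= B) ->
  `|f b - f a - (b - a) * df a| <= B / 2 * (b - a) ^+ 2.
Proof.
move=> ab fdf dfd2f d2fB; have ba_gt0 : 0 < b - a by rewrite subr_gt0.
set r := f b - f a - (b - a) * df a.
set K := r / (b - a) ^+ 2.
pose h t := f t - (t - a) * df a - K * ((t - a) * (t - a)).
have hdh (x : R) : is_derive x 1 h (df x - df a - 2 * K * (x - a)).
  have dxa := is_deriveB (is_derive_id x 1) (is_derive_cst a x 1).
  eapply is_derive_eq; first exact (is_deriveB (is_deriveB (fdf x)
    (is_deriveM dxa (is_derive_cst (df a) x 1)))
    (is_deriveM (is_derive_cst K x 1) (is_deriveM dxa dxa))).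
  by rewrite /GRing.scale !fctE /=; ring.
have [c /andP[ac _]] := MVT_everywhere ab hdh.
have -> : h b - h a = 0 by rewrite /h /K /r; field; rewrite gt_eqF.
move/esym/eqP; rewrite mulf_eq0 (gt_eqF ba_gt0) orbF subr_eq0 => /eqP dfc.
have [d _ d2fd] := MVT_everywhere ac dfd2f.
have K_d2f : K = d2f d / 2.
  have ca_neq0 : c - a != 0 by rewrite subr_eq0 gt_eqF.
  by move: d2fd; rewrite dfc => /(mulIf ca_neq0) <-; field.
have -> : r = K * (b - a) ^+ 2 by rewrite /K divfK // expf_neq0 // gt_eqF.
rewrite normrM (ger0_norm (sqr_ge0 _)) K_d2f normrM.
rewrite [`|2^-1|]ger0_norm ?invr_ge0 ?ler0n //.
by apply: ler_wpM2r; [exact: sqr_ge0 | apply: ler_wpM2r; rewrite ?invr_ge0].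
Qed.

End Calculus.

Lemma weighted_cauchy_schwarz (R : realDomainType) (I : finType) (S : {set I})
    (a x y : I -> R) :
  (forall i, 0 <= a i) ->
  (\sum_(i in S) a i * x i * y i) ^+ 2
    <= (\sum_(i in S) a i * x i ^+ 2) * (\sum_(i in S) a i * y i ^+ 2).
Proof.
move=> a_ge0; set A := \sum_(i in S) a i * x i ^+ 2.
set B := \sum_(i in S) a i * x i * y i; set C := \sum_(i in S) a i * y i ^+ 2.
have A_ge0 : 0 <= A by apply: sumr_ge0 => i _; rewrite mulr_ge0 ?sqr_ge0.
have [C0 | C_neq0] := eqVneq C 0.
  have aiyi0 : forall i, i \in S -> a i * y i ^+ 2 = 0.
    by apply: psumr_eq0P C0 => i _; rewrite mulr_ge0 ?sqr_ge0.
  suff -> : B = 0 by rewrite C0 expr0n mulr0.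
  apply: big1 => i /aiyi0 /eqP; rewrite mulf_eq0 sqrf_eq0 => /orP[] /eqP ->.
    by rewrite !mul0r.
  by rewrite mulr0.
have C_ge0 : 0 <= C by apply: sumr_ge0 => i _; rewrite mulr_ge0 ?sqr_ge0.
have expand k l : \sum_(i in S) a i * (k * x i - l * y i) ^+ 2
    = k ^+ 2 * A - 2 * k * l * B + l ^+ 2 * C.
  rewrite /A /B /C !mulr_sumr -sumrB -big_split /=.
  by apply: eq_bigr => i _; ring.
have : 0 <= \sum_(i in S) a i * (C * x i - B * y i) ^+ 2.
  by apply: sumr_ge0 => i _; rewrite mulr_ge0 ?sqr_ge0.
rewrite expand (_ : _ + _ = C * (A * C - B ^+ 2)); last by ring.
by rewrite pmulr_rge0 ?subr_ge0 // lt_def C_neq0.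
Qed.

Lemma weighted_cauchy_schwarz_sqrt (R : rcfType) (I : finType) (S : {set I})
    (a x y : I -> R) :
  (forall i, 0 <= a i) ->
  `|\sum_(i in S) a i * x i * y i|
    <= Num.sqrt (\sum_(i in S) a i * x i ^+ 2)
       * Num.sqrt (\sum_(i in S) a i * y i ^+ 2).
Proof.
move=> a_ge0; have sq_ge0 z : 0 <= \sum_(i in S) a i * z i ^+ 2.
  by apply: sumr_ge0 => i _; rewrite mulr_ge0 ?sqr_ge0.
rewrite -sqrtrM // -sqrtr_sqr ler_sqrt ?mulr_ge0 //.
exact: weighted_cauchy_schwarz.
Qed.

Section ChoiceModel.
Variables (R : realType) (N : nat) (S : {set 'I_N}).
Implicit Types (a c d x y u w : 'I_N -> R) (t : R).

(* [mnl_mean a c] is the expectation of [c] under the choice probabilities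
   a_j / (1 + sum_S a), the no-purchase option carrying the value 0, and
   [mnl_coskew a c d] is E[(c - E c)(d - E d)^2] for the same distribution. *)
Definition wsum a c : R := \sum_(j in S) c j * a j.
Definition mnl_den a : R := 1 + \sum_(j in S) a j.
Definition mnl_mean a c : R := wsum a c / mnl_den a.
Definition mnl_cov a c d : R := mnl_mean a (c * d) - mnl_mean a c * mnl_mean a d.
Definition mnl_coskew a c d : R :=
  mnl_cov a (c * d) d - (mnl_cov a c d * mnl_mean a d + mnl_mean a c * mnl_cov a d d).

Lemma QrevE u p : Qrev u S p = mnl_mean (fun j => expR (u j)) p.
Proof. by []. Qed.

Lemma mnl_den_gt0 a : (forall j, 0 <= a j) -> 0 < mnl_den a.
Proof. by move=> a_ge0; rewrite ltr_wpDr // sumr_ge0. Qed.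

Lemma mnl_mean_bounds a c (P : R) : (forall j, 0 <= a j) -> 0 <= P ->
  {in S, forall j, 0 <= c j <= P} -> 0 <= mnl_mean a c <= P.
Proof.
move=> a_ge0 P_ge0 cP; have D_gt0 := mnl_den_gt0 a_ge0.
rewrite /mnl_mean ler_pdivrMr // divr_ge0 ?(ltW D_gt0) //=; last first.
  by apply: sumr_ge0 => j /cP /andP[c_ge0 _]; rewrite mulr_ge0.
rewrite /mnl_den mulrDr mulr1 mulr_sumr -[wsum a c]add0r lerD //.
by apply: ler_sum => j /cP /andP[_ cle]; rewrite ler_wpM2r.
Qed.

Lemma wsum_centered a x y k :
  \sum_(j in S) a j * (x j - k) * y j = wsum a (x * y) - k * wsum a y.
Proof.
by rewrite /wsum mulr_sumr -sumrB; apply: eq_bigr => j _; rewrite !fctE; ring.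
Qed.

Lemma wsum_centered_sq a y l :
  \sum_(j in S) a j * (y j - l) ^+ 2
    = wsum a (y * y) - 2 * l * wsum a y + l ^+ 2 * \sum_(j in S) a j.
Proof.
rewrite /wsum !mulr_sumr -sumrB -big_split /=.
by apply: eq_bigr => j _; rewrite !fctE; ring.
Qed.

Lemma wsum_centered_cube a x y k l :
  \sum_(j in S) a j * (x j - k) * (y j - l) ^+ 2
    = wsum a (x * y * y) - 2 * l * wsum a (x * y) + l ^+ 2 * wsum a x
      - k * wsum a (y * y) + 2 * k * l * wsum a y - k * l ^+ 2 * \sum_(j in S) a j.
Proof.
rewrite /wsum !mulr_sumr -sumrB -big_split -sumrB -big_split -sumrB /=.
by apply: eq_bigr => j _; rewrite !fctE; ring.
Qed.

Lemma mnl_cov_centered a c d : (forall j, 0 <= a j) ->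
  mnl_cov a c d = \sum_(j in S) a j * (c j - mnl_mean a c) * (d j / mnl_den a).
Proof.
move=> a_ge0; have D_neq0 := lt0r_neq0 (mnl_den_gt0 a_ge0).
under eq_bigr do rewrite mulrA.
by rewrite -mulr_suml wsum_centered /mnl_cov /mnl_mean; field.
Qed.

Lemma mnl_coskew_centered a c d : (forall j, 0 <= a j) ->
  mnl_coskew a c d * mnl_den a
    = \sum_(j in S) a j * (c j - mnl_mean a c) * (d j - mnl_mean a d) ^+ 2
      - mnl_mean a c * mnl_mean a d ^+ 2.
Proof.
move=> a_ge0; have := lt0r_neq0 (mnl_den_gt0 a_ge0).
rewrite wsum_centered_cube /mnl_coskew /mnl_cov /mnl_mean /mnl_den => D_neq0.
by field.
Qed.

Lemma mnl_variance_le_moment2 a d : (forall j, 0 <= a j) ->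
  \sum_(j in S) a j * (d j - mnl_mean a d) ^+ 2 + mnl_mean a d ^+ 2
    <= wsum a (d * d).
Proof.
move=> a_ge0; have D_gt0 := mnl_den_gt0 a_ge0.
rewrite wsum_centered_sq /mnl_mean.
have -> : wsum a (d * d) - 2 * (wsum a d / mnl_den a) * wsum a d
          + (wsum a d / mnl_den a) ^+ 2 * \sum_(j in S) a j
          + (wsum a d / mnl_den a) ^+ 2
        = wsum a (d * d) - wsum a d ^+ 2 / mnl_den a.
  by move: (lt0r_neq0 D_gt0); rewrite /mnl_den => D_neq0; field.
by rewrite lerBlDr lerDl divr_ge0 ?sqr_ge0 ?ltW.
Qed.

Lemma mnl_coskew_le a c d (P M : R) : (forall j, 0 <= a j) -> 0 <= P -> 0 <= M ->
  {in S, forall j, 0 <= c j <= P} -> {in S, forall j, d j ^+ 2 <= M} ->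
  `|mnl_coskew a c d| <= P * M.
Proof.
move=> a_ge0 P_ge0 M_ge0 cP dM; have D_gt0 := mnl_den_gt0 a_ge0.
have /andP[C_ge0 C_le] := mnl_mean_bounds a_ge0 P_ge0 cP.
have var_le := mnl_variance_le_moment2 d a_ge0.
have moment2_le : wsum a (d * d) <= M * mnl_den a.
  rewrite /wsum /mnl_den mulrDr mulr1 mulr_sumr -[X in X <= _]add0r lerD //.
  by apply: ler_sum => j /dM dj_le; rewrite fctE -expr2 ler_wpM2r.
rewrite -(ler_pM2r D_gt0) -(gtr0_norm D_gt0) -normrM mnl_coskew_centered //.
rewrite (gtr0_norm D_gt0).
set C := mnl_mean a c in C_ge0 C_le *; set m := mnl_mean a d in var_le *.
have skew_le : `|\sum_(j in S) a j * (c j - C) * (d j - m) ^+ 2|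
    <= P * \sum_(j in S) a j * (d j - m) ^+ 2.
  rewrite mulr_sumr (le_trans (ler_norm_sum _ _ _)) //.
  apply: ler_sum => j /cP /andP[cj_ge0 cj_le].
  have cC_le : `|c j - C| <= P by rewrite ler_norml; apply/andP; split; lra.
  rewrite mulrAC normrM (ger0_norm (mulr_ge0 (a_ge0 j) (sqr_ge0 _))) mulrC.
  by apply: ler_wpM2r; first rewrite mulr_ge0 ?sqr_ge0.
rewrite (le_trans (ler_normB _ _)) // normrM (ger0_norm (sqr_ge0 _)) (ger0_norm C_ge0).
have : C * m ^+ 2 <= P * m ^+ 2 by rewrite ler_wpM2r ?sqr_ge0.
have : P * (\sum_(j in S) a j * (d j - m) ^+ 2 + m ^+ 2) <= P * M * mnl_den a.
  by rewrite -mulrA ler_wpM2l // (le_trans var_le).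
lra.
Qed.

Definition tilt u w (t : R) : 'I_N -> R := fun j => expR (u j + t * w j).

Lemma tilt_ge0 u w t j : 0 <= tilt u w t j.
Proof. exact: expR_ge0. Qed.

Lemma is_derive_wsum_tilt u w c t :
  is_derive t 1 (fun s => wsum (tilt u w s) c) (wsum (tilt u w t) (c * w)).
Proof.
have dterm j : is_derive t 1 (fun s => c j * tilt u w s j) (c j * w j * tilt u w t j).
  eapply is_derive_eq; first exact (is_deriveM (is_derive_cst (c j) t 1)
    (is_derive_expR_affine (u j) (w j) t)).
  by rewrite /tilt /GRing.scale /=; ring.
eapply is_derive_eq; first exact (is_derive_big_sum _ (fun j => j \in S) dterm).
by [].
Qed.

Lemma is_derive_mnl_den_tilt u w t :
  is_derive t 1 (fun s => mnl_den (tilt u w s)) (wsum (tilt u w t) w).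
Proof.
eapply is_derive_eq; first exact (is_deriveD (is_derive_cst (1 : R) t 1)
  (is_derive_big_sum _ (fun j => j \in S)
    (fun j => is_derive_expR_affine (u j) (w j) t))).
by rewrite add0r.
Qed.

Lemma is_derive_mnl_mean_tilt u w c t :
  is_derive t 1 (fun s => mnl_mean (tilt u w s) c) (mnl_cov (tilt u w t) c w).
Proof.
have D_neq0 := lt0r_neq0 (mnl_den_gt0 (tilt_ge0 u w t)).
eapply is_derive_eq; first exact (is_deriveM (is_derive_wsum_tilt u w c t)
  (is_deriveV (f := fun s => mnl_den (tilt u w s)) D_neq0
    (is_derive_mnl_den_tilt u w t))).
by rewrite /mnl_cov /mnl_mean /GRing.scale /=; field.
Qed.

Lemma is_derive_mnl_cov_tilt u w c t :
  is_derive t 1 (fun s => mnl_cov (tilt u w s) c w) (mnl_coskew (tilt u w t) c w).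
Proof.
eapply is_derive_eq; first exact (is_deriveB (is_derive_mnl_mean_tilt u w (c * w) t)
  (is_deriveM (is_derive_mnl_mean_tilt u w c t) (is_derive_mnl_mean_tilt u w w t))).
by rewrite /mnl_coskew /GRing.scale /=; ring.
Qed.

Lemma Qrev_taylor_le u w p (P M : R) : 0 <= P -> 0 <= M ->
  {in S, forall j, 0 <= p j <= P} -> {in S, forall j, w j ^+ 2 <= M} ->
  `|Qrev (fun j => u j + w j) S p - Qrev u S p - mnl_cov (fun j => expR (u j)) p w|
    <= P * M / 2.
Proof.
move=> P_ge0 M_ge0 pP wM.
have := taylor2_remainder_le ltr01 (is_derive_mnl_mean_tilt u w p)
  (is_derive_mnl_cov_tilt u w p)
  (fun t => mnl_coskew_le (tilt_ge0 u w t) P_ge0 M_ge0 pP wM).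
have -> : tilt u w 1 = fun j => expR (u j + w j).
  by apply/funext => j; rewrite /tilt mul1r.
have -> : tilt u w 0 = fun j => expR (u j).
  by apply/funext => j; rewrite /tilt mul0r addr0.
by rewrite subr0 mul1r expr1n mulr1 mulrC mulrA.
Qed.

Lemma Qrev_cov_le u p w :
  `|mnl_cov (fun j => expR (u j)) p w|
    <= Num.sqrt (\sum_(j in S) expR (u j) * `|p j - Qrev u S p| ^+ 2)
       * Num.sqrt (\sum_(j in S) qi S p u j * q0 S p u * w j ^+ 2).
Proof.
have a_ge0 j : 0 <= expR (u j) := expR_ge0 _.
have D_neq0 : denom u S != 0 := lt0r_neq0 (mnl_den_gt0 a_ge0).
have -> : \sum_(j in S) expR (u j) * `|p j - Qrev u S p| ^+ 2
        = \sum_(j in S) expR (u j) * (p j - Qrev u S p) ^+ 2.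
  by apply: eq_bigr => j _; rewrite real_normK ?num_real.
have -> : \sum_(j in S) qi S p u j * q0 S p u * w j ^+ 2
        = \sum_(j in S) expR (u j) * (w j / denom u S) ^+ 2.
  by apply: eq_bigr => j _; rewrite /qi /q0; field.
rewrite mnl_cov_centered // QrevE.
exact: weighted_cauchy_schwarz_sqrt.
Qed.

Lemma Qrev_diff_le u u' p (P : R) : 0 <= P -> {in S, forall j, 0 <= p j <= P} ->
  `|Qrev u' S p - Qrev u S p|
    <= Num.sqrt (\sum_(j in S) expR (u j) * `|p j - Qrev u S p| ^+ 2)
       * Num.sqrt (\sum_(j in S) qi S p u j * q0 S p u * (u' j - u j) ^+ 2)
     + 3 / 2 * P * maxS S (fun j => (u' j - u j) ^+ 2).
Proof.
move=> P_ge0 pP; set w := fun j => u' j - u j.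
set M := maxS S (fun j => w j ^+ 2).
have M_ge0 : 0 <= M by exact: bigmax_ge_id.
have wM : {in S, forall j, w j ^+ 2 <= M} by move=> j jS; exact: le_bigmax_cond.
have := Qrev_taylor_le u P_ge0 M_ge0 pP wM.
have -> : (fun j => u j + w j) = u' by apply/funext => j; rewrite /w addrC subrK.
have := Qrev_cov_le u p w.
have := ler_normD (Qrev u' S p - Qrev u S p - mnl_cov (fun j => expR (u j)) p w)
  (mnl_cov (fun j => expR (u j)) p w).
have : 0 <= P * M := mulr_ge0 P_ge0 M_ge0.
rewrite subrK; lra.
Qed.

Lemma Qrev_lt_raise_price u p j (x : R) : j \in S -> p j < x ->
  Qrev u S p < Qrev u S [eta p with j |-> x].
Proof.
move=> jS pj_lt; have D_gt0 : 0 < denom u S := mnl_den_gt0 (fun j => expR_ge0 (u j)).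
rewrite /Qrev ltr_pM2r ?invr_gt0 // (bigD1 j jS) [X in _ < X](bigD1 j jS) /= eqxx.
rewrite ltr_leD ?ltr_pM2r ?expR_gt0 //.
by apply: ler_sum => i /andP[_ /negbTE ->].
Qed.

Lemma optimal_prices_eq_max u p (P : R) : (forall j, 0 <= p j <= P) ->
  (forall p', (forall j, 0 <= p' j <= P) -> Qrev u S p' <= Qrev u S p) ->
  {in S, forall j, p j = P}.
Proof.
move=> pP p_opt j jS; have /andP[pj_ge0 pj_le] := pP j.
apply/eqP; rewrite eq_le pj_le leNgt; apply/negP => pj_lt.
have /p_opt : forall i, 0 <= [eta p with j |-> P] i <= P.
  by move=> i /=; case: eqP => _ //; rewrite lexx andbT (le_trans pj_ge0).
by rewrite leNgt Qrev_lt_raise_price.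
Qed.

Lemma Qrev_dev_le_max_price u p (P : R) : 0 <= P -> {in S, forall j, p j = P} ->
  Num.sqrt (\sum_(j in S) expR (u j) * `|p j - Qrev u S p| ^+ 2) <= P.
Proof.
move=> P_ge0 pP; set E := \sum_(j in S) expR (u j).
have E_ge0 : 0 <= E by apply: sumr_ge0 => j _; exact: expR_ge0.
have QE : Qrev u S p = P * E / (1 + E).
  rewrite /Qrev /denom -/E mulr_sumr; congr (_ / _).
  by apply: eq_bigr => j /pP ->.
have -> : \sum_(j in S) expR (u j) * `|p j - Qrev u S p| ^+ 2
        = P ^+ 2 * (E / (1 + E) ^+ 2).
  rewrite (eq_bigr (fun j => (P - Qrev u S p) ^+ 2 * expR (u j))); last first.
    by move=> j /pP ->; rewrite real_normK ?num_real // mulrC.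
  by rewrite -mulr_sumr -/E QE; field; rewrite lt0r_neq0 // ltr_wpDr.
rewrite -[leRHS]ger0_norm // -sqrtr_sqr ler_sqrt ?sqr_ge0 //.
rewrite ler_piMr ?sqr_ge0 // ler_pdivrMr ?exprn_gt0 ?ltr_wpDr // mul1r.
nra.
Qed.

Lemma Qrev_diff_le_optimal u ut p (P : R) : 0 <= P -> (forall j, 0 <= p j <= P) ->
  (forall p', (forall j, 0 <= p' j <= P) -> Qrev ut S p' <= Qrev ut S p) ->
  `|Qrev ut S p - Qrev u S p|
    <= P * Num.sqrt (\sum_(j in S) qi S p ut j * q0 S p ut * (ut j - u j) ^+ 2)
     + 3 / 2 * P * maxS S (fun j => (ut j - u j) ^+ 2).
Proof.
move=> P_ge0 pP p_opt.
have sqr_flip j : (u j - ut j) ^+ 2 = (ut j - u j) ^+ 2 by rewrite -opprB sqrrN.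
rewrite distrC (le_trans (Qrev_diff_le ut u P_ge0 (fun j _ => pP j))) //.
under [X in _ * Num.sqrt X + _ <= _]eq_bigr do rewrite sqr_flip.
under [X in maxS S X]eq_fun do rewrite sqr_flip.
rewrite lerD2r ler_wpM2r ?sqrtr_ge0 //.
exact: Qrev_dev_le_max_price P_ge0 (optimal_prices_eq_max pP p_opt).
Qed.

End ChoiceModel.

Theorem propositionC2 (R : realType) (N K : nat) (P : R) :
  0 < P -> (K <= N)%N ->
  (* (i) *)
  (forall (S : {set 'I_N}) (p u u' : 'I_N -> R),
     feasible K P S p ->
     let w := fun j => u' j - u j in
     `|Qrev u' S p - Qrev u S p|
       <= Num.sqrt (\sum_(j in S) expR (u j) * `|p j - Qrev u S p| ^+ 2)
          * Num.sqrt (\sum_(j in S) qi S p u j * q0 S p u * w j ^+ 2)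
        + 3 / 2 * P * maxS S (fun j => w j ^+ 2))
  /\
  (* (ii) *)
  (forall (u ut : 'I_N -> R) (St : {set 'I_N}) (pt : 'I_N -> R),
     (forall j, u j <= ut j) ->
     feasible K P St pt ->
     (forall (S : {set 'I_N}) (p : 'I_N -> R),
        feasible K P S p -> Qrev ut S p <= Qrev ut St pt) ->
     let wt := fun j => ut j - u j in
     `|Qrev ut St pt - Qrev u St pt|
       <= P * Num.sqrt (\sum_(j in St) qi St pt ut j * q0 St pt ut * wt j ^+ 2)
        + 3 / 2 * P * maxS St (fun j => wt j ^+ 2)).
Proof.
move=> /ltW P_ge0 _; split.
  by move=> S p u u' [_ pP]; exact: Qrev_diff_le P_ge0 (fun j _ => pP j).
move=> u ut St pt _ [StK ptP] pt_opt.
apply: Qrev_diff_le_optimal P_ge0 ptP _ => p pP.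
exact: pt_opt (conj StK pP).
Qed.
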